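(* Let $\alpha=(\alpha_1,\dots,\alpha_t)$ be palindromic (i.e. $\alpha_i=\alpha_{t+1-i}$ for all $i$) with $t$ odd, let $F=\breve F(\alpha)$ with elements $x_1,\dots,x_n$. The statistics $\chi_{x_k}-\chi_{x_{n-k+1}}$ are $0$-mesic under rowmotion for all $k\in[n]$ if and only if the statistics $\hat\chi_{x_k}+\hat\chi_{x_{n-k+1}}$ are $1$-mesic under rowmotion for all $k\in[n]$.
   Context: A fence $\breve F(\alpha_1,\dots,\alpha_t)$ ($t\ge2$, positive integers, $\alpha_1,\alpha_t\ge2$) is the poset on $\{x_1,\dots,x_n\}$, $n=\alpha_1+\dots+\alpha_t-1$, with $a_i=\alpha_1+\dots+\alpha_i$, $a_0=0$, whose cover relations are: for $1\le j\le n-1$ with $a_{i-1}\le j<a_i$, $x_j\lessdot x_{j+1}$ if $i$ odd and $x_j\gtrdot x_{j+1}$ if $i$ even. $\mathcal J(F)$ is the set of order ideals; rowmotion $\rho$ sends $I$ to the order ideal generated by $\min(F\setminus I)$. $\hat\chi_q(I)=1$ if $q\in I$, else 0; $\chi_q(I)=1$ if $q\in\max(I)$, else 0. A statistic is $c$-mesic under rowmotion if its average over every $\rho$-orbit equals $c$. *)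

From mathcomp Require Import all_boot all_order all_algebra.
Unset Printing Implicit Defensive.
Import GRing.Theory Num.Theory.

(* Fence F(alpha_1,...,alpha_t). Elements x_1..x_n are represented by 'I_n,
   x_(k+1) <-> the ordinal k (0-indexed). *)

Definition fence_n (alpha : seq nat) : nat := (sumn alpha).-1.

Definition psum (alpha : seq nat) (i : nat) : nat := sumn (take i alpha).

(* for 1 <= j <= n-1, the unique i with a_(i-1) <= j < a_i *)
Definition seg (alpha : seq nat) (j : nat) : nat :=
  (count (fun i => psum alpha i <= j) (iota 1 (size alpha))).+1.

(* cover relation u <. v (u covered by v), for 0-indexed u v.
   For 1-indexed j (the pair x_j, x_(j+1), i.e. 0-indexed j-1, j):
   x_j <. x_(j+1) if seg j odd, x_j >. x_(j+1) if seg j even. *)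
Definition fcover (alpha : seq nat) : rel 'I_(fence_n alpha) :=
  fun u v => ((v == u.+1 :> nat) && odd (seg alpha u.+1))
          || ((u == v.+1 :> nat) && ~~ odd (seg alpha v.+1)).

Definition fle (alpha : seq nat) (u v : 'I_(fence_n alpha)) : bool :=
  connect (fcover alpha) u v.
Definition flt (alpha : seq nat) (u v : 'I_(fence_n alpha)) : bool :=
  (u != v) && fle alpha u v.

Definition is_ideal (alpha : seq nat) (I : {set 'I_(fence_n alpha)}) : bool :=
  [forall u, forall v, fle alpha u v ==> (v \in I) ==> (u \in I)].

Definition min_compl (alpha : seq nat) (I : {set 'I_(fence_n alpha)}) :=
  [set x | (x \notin I) && [forall y, (y \notin I) ==> ~~ flt alpha y x]].

Definition ideal_gen (alpha : seq nat) (S : {set 'I_(fence_n alpha)}) :=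
  [set x | [exists y, (y \in S) && fle alpha x y]].

Definition rowmotion (alpha : seq nat) (I : {set 'I_(fence_n alpha)}) :
  {set 'I_(fence_n alpha)} := ideal_gen alpha (min_compl alpha I).

Definition chihat (alpha : seq nat) (q : 'I_(fence_n alpha))
  (I : {set 'I_(fence_n alpha)}) : rat := (q \in I)%:R%R.

Definition chi (alpha : seq nat) (q : 'I_(fence_n alpha))
  (I : {set 'I_(fence_n alpha)}) : rat :=
  ((q \in I) && [forall y, (y \in I) ==> ~~ flt alpha q y])%:R%R.

Definition mesic (alpha : seq nat) (f : {set 'I_(fence_n alpha)} -> rat)
  (c : rat) : Prop :=
  forall I : {set 'I_(fence_n alpha)}, is_ideal alpha I ->
    ((\sum_(J <- orbit (rowmotion alpha) I) f J)
      / (size (orbit (rowmotion alpha) I))%:R = c)%R.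

From mathcomp Require Import all_boot all_order all_algebra.
From mathcomp Require Import zify ring.
Import GRing.Theory Num.Theory.

(* In a fence every element p is maximal, minimal, or has a unique upper cover u
   lying below every other element above p.  Rowmotion permutes each orbit, and the
   maximal elements of the rowmotion of J are the minimal elements of the complement
   of J, so over an orbit the sum of chi_p is the sum of chihat_p, of
   chihat_p - chihat_u, or of 1 - chihat_p respectively (dually for lower covers).
   For palindromic alpha with t odd, p |-> p' := x_(n-k+1) for p = x_k reverses the
   order, so with a_p = sum (chi_p - chi_p') and b_p = sum (chihat_p + chihat_p' - 1)
   over an orbit, one of a_p = b_p, a_p = b_p - b_u with u > p, or a_p = - b_p holds.
   Hence all b_p vanish when all a_p do, by induction from the top of the poset,
   and conversely. *)

Lemma fin_strict_ind {T : finType} {lt : rel T} :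
  irreflexive lt -> transitive lt ->
  forall P : T -> Prop, (forall x, (forall y, lt y x -> P y) -> P x) -> forall x, P x.
Proof.
move=> ltxx lt_trans P IH x; have [k] := ubnP #|[set y | lt y x]|.
elim: k x => // k IHk x; rewrite ltnS => Hx; apply: IH => y ltyx.
apply: IHk; apply: leq_trans Hx; apply: proper_card; apply/properP; split.
  by apply/subsetP => z; rewrite !inE => ltzy; exact: lt_trans ltzy ltyx.
by exists y; rewrite !inE ?ltxx.
Qed.

Lemma perm_map_fcycle (T : eqType) (f : T -> T) (c : seq T) :
  fcycle f c -> perm_eq (map f c) c.
Proof.
have map_belast x q : fpath f x q -> map f (belast x q) = q.
  by elim: q x => //= y q IHq x /andP[/eqP-> /IHq->].
case: c => [//|x p] /map_belast; rewrite belast_rcons => ->.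
by rewrite -rot1_cons perm_rot.
Qed.

Lemma sum_orbit_shift_in (T : finType) (R : nmodType) (f : T -> T) (S : {pred T})
    (g : T -> R) (x : T) :
  {homo f : y / y \in S} -> {in S &, injective f} -> x \in S ->
  (\sum_(y <- orbit f x) g (f y) = \sum_(y <- orbit f x) g y)%R.
Proof.
move=> f_S f_inj Sx; rewrite -(big_map f xpredT g); apply: perm_big.
exact: perm_map_fcycle (cycle_orbit_in f_S f_inj Sx).
Qed.

Lemma count_iota_rev (P : pred nat) m :
  count (fun k => P (m - k)) (iota 0 m.+1) = count P (iota 0 m.+1).
Proof.
rewrite -!sum1_count -[iota 0 m.+1]/(index_iota 0 m.+1) [RHS]big_nat_rev.
by apply: eq_bigl => k; rewrite add0n subSS.
Qed.

Lemma rev_palindrome {T : Type} {x0 : T} {s : seq T} :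
  (forall i, i < size s -> nth x0 s i = nth x0 s (size s - 1 - i)) -> rev s = s.
Proof.
move=> pal; apply: (@eq_from_nth _ x0); rewrite size_rev // => i lt_i.
by rewrite nth_rev // pal; [congr nth; lia | lia].
Qed.

Section Fence.
Variable alpha : seq nat.
Local Notation n := (fence_n alpha).
Local Notation T := 'I_(fence_n alpha).

(* [rising j]: the element of 0-based index [j] is covered by [j.+1]; otherwise it covers it. *)
Definition rising (j : nat) : bool := odd (seg alpha j.+1).

Definition monotone_walk (u v : nat) : Prop :=
  (u <= v /\ forall j, u <= j < v -> rising j) \/
  (v <= u /\ forall j, v <= j < u -> ~~ rising j).

Lemma fcover_walk (x y z : T) :
  fcover alpha x y -> monotone_walk y z -> monotone_walk x z.
Proof.
rewrite /fcover /monotone_walk -!/(rising _).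
case/orP=> /andP[/eqP Exy cov] [[le_yz ry]|[le_zy ry]].
- left; split=> [|j ?]; first lia.
  by case: (j =P x) => [-> //|/eqP ?]; apply: ry; lia.
- have [Ezy|?] := eqVneq (z : nat) y.
    by left; split=> [|j ?]; [lia | have -> : j = x by lia].
  by have := ry x; rewrite cov => /(_ _) /negP; lia.
- have [Ezy|?] := eqVneq (z : nat) y.
    by right; split=> [|j ?]; [lia | have -> : j = y by lia].
  by have := ry y; rewrite (negbTE cov) => /(_ _); lia.
- right; split=> [|j ?]; first lia.
  by case: (j =P y) => [-> //|/eqP ?]; apply: ry; lia.
Qed.

Lemma fle_refl : reflexive (fle alpha). Proof. exact: connect0. Qed.

Lemma fle_rising (u v : T) :
  u <= v -> (forall j, u <= j < v -> rising j) -> fle alpha u v.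
Proof.
move=> le_uv; have [d Ev] : exists d, v = u + d :> nat by exists (v - u); lia.
elim: d v Ev le_uv => [|d IHd] v Ev _ r.
  suff -> : v = u by apply: fle_refl.
  by apply: ord_inj; lia.
have lt_w : u + d < n by have := ltn_ord v; lia.
apply: connect_trans (IHd (Ordinal lt_w) erefl (leq_addr d u) _) (connect1 _).
  by move=> j /= ?; apply: r; lia.
by apply/orP; left; rewrite Ev addnS eqxx; apply: r => /=; lia.
Qed.

Lemma fle_falling (u v : T) :
  v <= u -> (forall j, v <= j < u -> ~~ rising j) -> fle alpha u v.
Proof.
move=> le_vu; have [d Eu] : exists d, u = v + d :> nat by exists (u - v); lia.
elim: d u Eu le_vu => [|d IHd] u Eu _ f.
  suff -> : u = v by apply: fle_refl.
  by apply: ord_inj; lia.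
have lt_w : v + d < n by have := ltn_ord u; lia.
apply: connect_trans (connect1 _) (IHd (Ordinal lt_w) erefl (leq_addr d v) _); last first.
  by move=> j /= ?; apply: f; lia.
by apply/orP; right; rewrite Eu addnS eqxx; apply: f => /=; lia.
Qed.

Lemma fleP (u v : T) : fle alpha u v <-> monotone_walk u v.
Proof.
split=> [/connectP[p] | [[le_uv r]|[le_vu f]]]; last 2 first.
- exact: fle_rising.
- exact: fle_falling.
elim: p u => [|y p IHp] u /= => [_ -> | /andP[cov /IHp walk /walk]]; last exact: fcover_walk.
by left; split=> // j; lia.
Qed.

Lemma fle_trans {u v w : T} : fle alpha u v -> fle alpha v w -> fle alpha u w.
Proof. exact: connect_trans. Qed.

Lemma fle_anti : antisymmetric (fle alpha).
Proof.
move=> u v /andP[/fleP uv /fleP vu]; apply: ord_inj.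
case: (ltngtP u v) => // [lt_uv|lt_vu]; exfalso.
- case: uv vu => [[_ r]|[? _]] [[? _]|[_ f]]; try lia.
  by have /negP[] := f u ltac:(lia); apply: r; lia.
- case: uv vu => [[? _]|[_ f]] [[_ r]|[? _]]; try lia.
  by have /negP[] := f v ltac:(lia); apply: r; lia.
Qed.

Lemma flt_fle {u v : T} : flt alpha u v -> fle alpha u v.
Proof. by case/andP. Qed.

Lemma flt_irr : irreflexive (flt alpha).
Proof. by move=> u; rewrite /flt eqxx. Qed.

Lemma flt_fle_trans {u v w : T} : flt alpha u v -> fle alpha v w -> flt alpha u w.
Proof.
case/andP=> neq_uv le_uv le_vw; rewrite /flt (fle_trans le_uv le_vw) andbT.
apply: contra_neq neq_uv => Euw; rewrite Euw in le_uv *.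
by apply: fle_anti; rewrite le_uv le_vw.
Qed.

Lemma flt_trans : transitive (flt alpha).
Proof. by move=> v u w /flt_fle_trans lt_uv /flt_fle /lt_uv. Qed.

Lemma flt_neq {u v : T} : flt alpha u v -> (u : nat) != v.
Proof. by case/andP. Qed.

Lemma fle_rising_at {u v : T} {j : nat} : fle alpha u v -> u <= j < v -> rising j.
Proof. by case/fleP=> [[_ r]|[? _]] ?; [apply: r | lia]. Qed.

Lemma fle_falling_at {u v : T} {j : nat} : fle alpha u v -> v <= j < u -> ~~ rising j.
Proof. by case/fleP=> [[? _]|[_ f]] ?; [lia | apply: f]. Qed.

Definition is_max (J : {set T}) (p : T) : bool :=
  (p \in J) && [forall y, (y \in J) ==> ~~ flt alpha p y].

Lemma is_max_ideal_gen (S : {set T}) :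
  {in S &, forall x y, ~~ flt alpha x y} ->
  forall p, is_max (ideal_gen alpha S) p = (p \in S).
Proof.
move=> antiS p.
have genS m : m \in S -> m \in ideal_gen alpha S.
  by move=> Sm; rewrite inE; apply/existsP; exists m; rewrite Sm fle_refl.
apply/idP/idP => [|Sp].
  case/andP; rewrite inE => /existsP[m /andP[Sm le_pm]] /forallP/(_ m).
  by rewrite genS //= /flt le_pm andbT negbK => /eqP->.
rewrite /is_max genS //=; apply/forallP => y; apply/implyP.
rewrite inE => /existsP[m /andP[Sm le_ym]]; apply: contraNN (antiS _ _ Sp Sm).
by move=> lt_py; apply: flt_fle_trans lt_py le_ym.
Qed.

Lemma min_compl_antichain (J : {set T}) :
  {in min_compl alpha J &, forall x y, ~~ flt alpha x y}.
Proof. by move=> x y; rewrite !inE => /andP[xJ _] /andP[_ /forallP/(_ x)/implyP/(_ xJ)]. Qed.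

Lemma is_max_rowmotion (J : {set T}) p :
  is_max (rowmotion alpha J) p = (p \in min_compl alpha J).
Proof. exact: is_max_ideal_gen (@min_compl_antichain J) p. Qed.

Lemma chi_rowmotion (J : {set T}) p :
  chi alpha p (rowmotion alpha J) = (p \in min_compl alpha J)%:R%R.
Proof. by rewrite -is_max_rowmotion. Qed.

Lemma idealP {J : {set T}} {u v : T} :
  is_ideal alpha J -> fle alpha u v -> v \in J -> u \in J.
Proof. by move=> /forallP/(_ u)/forallP/(_ v)/implyP uv /uv/implyP. Qed.

Lemma ideal_gen_ideal (S : {set T}) : is_ideal alpha (ideal_gen alpha S).
Proof.
apply/forallP => u; apply/forallP => v; apply/implyP => le_uv; apply/implyP.
rewrite !inE => /existsP[m /andP[Sm le_vm]]; apply/existsP; exists m.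
by rewrite Sm (fle_trans le_uv le_vm).
Qed.

Lemma min_compl_below (J : {set T}) x :
  x \notin J -> exists2 m, m \in min_compl alpha J & fle alpha m x.
Proof.
elim/(fin_strict_ind flt_irr flt_trans): x => x IH xJ.
case minx: (x \in min_compl alpha J); first by exists x; rewrite ?fle_refl.
move: minx; rewrite inE xJ /= => /negbT; rewrite negb_forall.
case/existsP=> y; rewrite negb_imply negbK => /andP[yJ lt_yx].
have [m min_m le_my] := IH y lt_yx yJ.
by exists m => //; exact: fle_trans le_my (flt_fle lt_yx).
Qed.

Lemma notin_idealE (J : {set T}) x : is_ideal alpha J ->
  (x \notin J) = [exists m, (m \in min_compl alpha J) && fle alpha m x].
Proof.
move=> idJ; apply/idP/existsP => [/min_compl_below[m min_m le_mx] | [m]].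
  by exists m; rewrite min_m.
rewrite inE => /andP[/andP[mJ _] le_mx].
exact: contraNN (idealP idJ le_mx) mJ.
Qed.

Lemma rowmotion_inj : {in is_ideal alpha &, injective (rowmotion alpha)}.
Proof.
move=> I J idI idJ eq_rho.
have eq_min : min_compl alpha I = min_compl alpha J.
  by apply/setP => p; rewrite -!is_max_rowmotion eq_rho.
by apply/setP => x; apply: negb_inj; rewrite !notin_idealE // eq_min.
Qed.

Lemma sum_orbit_rowmotion {R : nmodType} (g : {set T} -> R) (I : {set T}) :
  is_ideal alpha I ->
  (\sum_(J <- orbit (rowmotion alpha) I) g (rowmotion alpha J) =
   \sum_(J <- orbit (rowmotion alpha) I) g J)%R.
Proof.
apply: sum_orbit_shift_in rowmotion_inj => J _; exact: ideal_gen_ideal.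
Qed.

Lemma orbit_ideal {I J : {set T}} :
  is_ideal alpha I -> J \in orbit (rowmotion alpha) I -> is_ideal alpha J.
Proof.
move=> idI; rewrite -fconnect_orbit => /iter_findex <-.
by case: findex => //= k; apply: ideal_gen_ideal.
Qed.


Definition maximal (p : T) : Prop := forall y, ~~ flt alpha p y.
Definition minimal (p : T) : Prop := forall y, ~~ flt alpha y p.
Definition unique_upper_cover (p u : T) : Prop :=
  flt alpha p u /\ forall y, flt alpha p y -> fle alpha u y.
Definition unique_lower_cover (p l : T) : Prop :=
  flt alpha l p /\ forall y, flt alpha y p -> fle alpha y l.

Definition covered_right (p : nat) : bool := (p.+1 < n) && rising p.
Definition covered_left (p : nat) : bool := (0 < p) && ~~ rising p.-1.

Lemma covered_right_flt {p y : T} : flt alpha p y -> p < y -> covered_right p.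
Proof.
move=> lt_py lt; have := ltn_ord y.
have r : rising p by apply: (fle_rising_at (flt_fle lt_py)); lia.
by rewrite /covered_right r andbT; lia.
Qed.

Lemma covered_left_flt {p y : T} : flt alpha p y -> y < p -> covered_left p.
Proof.
move=> lt_py lt; have f : ~~ rising p.-1 by apply: (fle_falling_at (flt_fle lt_py)); lia.
by rewrite /covered_left f andbT; lia.
Qed.

Lemma maximal_uncovered (p : T) :
  ~~ covered_right p -> ~~ covered_left p -> maximal p.
Proof.
move=> nR nL y; apply/negP => lt_py; case: (ltngtP p y) (flt_neq lt_py) => // lt _.
- by rewrite (covered_right_flt lt_py lt) in nR.
- by rewrite (covered_left_flt lt_py lt) in nL.
Qed.

Lemma minimal_covered (p : T) : covered_right p -> covered_left p -> minimal p.
Proof.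
case/andP=> _ r /andP[_ f] y; apply/negP => lt_yp.
case: (ltngtP y p) (flt_neq lt_yp) => // lt _.
- by move/negP: f; apply; apply: (fle_rising_at (flt_fle lt_yp)); lia.
- have f' : ~~ rising p by apply: (fle_falling_at (flt_fle lt_yp)); lia.
  by rewrite r in f'.
Qed.

Lemma unique_upper_cover_right (p : T) (lt_p1 : p.+1 < n) :
  rising p -> ~~ covered_left p -> unique_upper_cover p (Ordinal lt_p1).
Proof.
move=> r nL; have above y : flt alpha p y -> p < y.
  move=> lt_py; case: (ltngtP p y) (flt_neq lt_py) => // lt _.
  by rewrite (covered_left_flt lt_py lt) in nL.
split=> [|y lt_py].
  apply/andP; split; first by rewrite -val_eqE /=; lia.
  by apply: fle_rising => /= [|j ?]; [lia | have -> : j = p by lia].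
have lt := above y lt_py; apply: fle_rising => /= [|j ?]; first lia.
by apply: (fle_rising_at (flt_fle lt_py)); lia.
Qed.

Lemma unique_upper_cover_left (p : T) (lt_p : p.-1 < n) :
  0 < p -> ~~ rising p.-1 -> ~~ covered_right p -> unique_upper_cover p (Ordinal lt_p).
Proof.
move=> p_gt0 f nR; have below y : flt alpha p y -> y < p.
  move=> lt_py; case: (ltngtP p y) (flt_neq lt_py) => // lt _.
  by rewrite (covered_right_flt lt_py lt) in nR.
split=> [|y lt_py].
  apply/andP; split; first by rewrite -val_eqE /=; lia.
  by apply: fle_falling => /= [|j ?]; [lia | have -> : j = p.-1 by lia].
have lt := below y lt_py; apply: fle_falling => /= [|j ?]; first lia.
by apply: (fle_falling_at (flt_fle lt_py)); lia.
Qed.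

Lemma fence_trichotomy (p : T) :
  maximal p \/ (exists u, unique_upper_cover p u) \/ minimal p.
Proof.
have [R|nR] := boolP (covered_right p); have [L|nL] := boolP (covered_left p).
- by right; right; apply: minimal_covered.
- right; left; case/andP: R => lt_p1 r.
  by exists (Ordinal lt_p1); apply: unique_upper_cover_right.
- right; left; case/andP: L => p_gt0 f.
  by exists (Ordinal (leq_ltn_trans (leq_pred p) (ltn_ord p))); apply: unique_upper_cover_left.
- by left; apply: maximal_uncovered.
Qed.


Section RowmotionOrbits.
Local Open Scope ring_scope.

Lemma chi_maximal q (J : {set T}) : maximal q -> chi alpha q J = chihat alpha q J.
Proof.
move=> max_q; rewrite /chi /chihat.
have -> : [forall y, (y \in J) ==> ~~ flt alpha q y].
  by apply/forallP => y; apply/implyP => _; apply: max_q.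
by rewrite andbT.
Qed.

Lemma chi_unique_upper_cover q u (J : {set T}) :
  is_ideal alpha J -> unique_upper_cover q u ->
  chi alpha q J = chihat alpha q J - chihat alpha u J.
Proof.
move=> idJ [lt_qu above_u]; rewrite /chi /chihat; have [uJ|nuJ] := boolP (u \in J).
  have -> : [forall y, (y \in J) ==> ~~ flt alpha q y] = false.
    by apply/negbTE; rewrite negb_forall; apply/existsP; exists u; rewrite uJ lt_qu.
  by rewrite (idealP idJ (flt_fle lt_qu) uJ) subrr.
have -> : [forall y, (y \in J) ==> ~~ flt alpha q y].
  apply/forallP => y; apply/implyP => yJ; apply: contra nuJ => /above_u le_uy.
  exact: idealP idJ le_uy yJ.
by rewrite andbT subr0.
Qed.

Lemma min_compl_minimal q (J : {set T}) :
  minimal q -> (q \in min_compl alpha J)%:R = 1 - chihat alpha q J.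
Proof.
move=> min_q; rewrite inE /chihat.
have -> : [forall y, (y \notin J) ==> ~~ flt alpha y q].
  by apply/forallP => y; apply/implyP => _; apply: min_q.
by case: (q \in J); rewrite /= ?subrr ?subr0.
Qed.

Lemma min_compl_unique_lower_cover q l (J : {set T}) :
  is_ideal alpha J -> unique_lower_cover q l ->
  (q \in min_compl alpha J)%:R = chihat alpha l J - chihat alpha q J.
Proof.
move=> idJ [lt_lq below_l]; rewrite inE /chihat; have [qJ|nqJ] := boolP (q \in J).
  by rewrite (idealP idJ (flt_fle lt_lq) qJ) subrr.
have [lJ|nlJ] := boolP (l \in J).
  have -> : [forall y, (y \notin J) ==> ~~ flt alpha y q].
    apply/forallP => y; apply/implyP; apply: contra => /below_l le_yl.
    exact: idealP idJ le_yl lJ.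
  by rewrite subr0.
have -> : [forall y, (y \notin J) ==> ~~ flt alpha y q] = false.
  by apply/negbTE; rewrite negb_forall; apply/existsP; exists l; rewrite nlJ lt_lq.
by rewrite subrr.
Qed.

Context {I : {set T}} (idI : is_ideal alpha I).
Local Notation O := (orbit (rowmotion alpha) I).

Lemma sum_chi_min_compl p :
  \sum_(J <- O) chi alpha p J = \sum_(J <- O) (p \in min_compl alpha J)%:R.
Proof.
rewrite -(sum_orbit_rowmotion (chi alpha p) I idI).
by apply: eq_bigr => J _; apply: chi_rowmotion.
Qed.

Lemma sum_chi_maximal {p : T} : maximal p ->
  \sum_(J <- O) chi alpha p J = \sum_(J <- O) chihat alpha p J.
Proof. by move=> max_p; apply: eq_bigr => J _; apply: chi_maximal. Qed.

Lemma sum_chi_minimal {p : T} : minimal p ->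
  \sum_(J <- O) chi alpha p J = (size O)%:R - \sum_(J <- O) chihat alpha p J.
Proof.
move=> min_p; rewrite sum_chi_min_compl -sum1_size natr_sum -sumrB.
by apply: eq_bigr => J _; apply: min_compl_minimal.
Qed.

Lemma sum_chi_unique_upper_cover {p u : T} : unique_upper_cover p u ->
  \sum_(J <- O) chi alpha p J =
  \sum_(J <- O) chihat alpha p J - \sum_(J <- O) chihat alpha u J.
Proof.
move=> cov; rewrite -sumrB; apply: eq_big_seq => J /(orbit_ideal idI) idJ.
exact: chi_unique_upper_cover.
Qed.

Lemma sum_chi_unique_lower_cover {p l : T} : unique_lower_cover p l ->
  \sum_(J <- O) chi alpha p J =
  \sum_(J <- O) chihat alpha l J - \sum_(J <- O) chihat alpha p J.
Proof.
move=> cov; rewrite sum_chi_min_compl -sumrB.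
apply: eq_big_seq => J /(orbit_ideal idI) idJ; exact: min_compl_unique_lower_cover.
Qed.

End RowmotionOrbits.

Section Mesic.
Local Open Scope ring_scope.

Lemma mesicE (f : {set T} -> rat) (c : rat) :
  mesic alpha f c <-> forall I, is_ideal alpha I ->
    \sum_(J <- orbit (rowmotion alpha) I) f J =
    c * (size (orbit (rowmotion alpha) I))%:R.
Proof.
have N_neq0 I : (size (orbit (rowmotion alpha) I))%:R != 0 :> rat.
  by rewrite pnatr_eq0 size_orbit -lt0n order_gt0.
by split=> mesic_f I /mesic_f; [move<- | move->]; rewrite ?divfK ?mulfK.
Qed.

Lemma defects_eq0 {R : zmodType} {a b : T -> R} :
  (forall p, a p = b p \/ (exists2 u, flt alpha p u & a p = b p - b u) \/ a p = - b p) ->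
  (forall p, a p = 0) <-> (forall p, b p = 0).
Proof.
move=> ab; split=> [a0|b0 p]; last first.
  by case: (ab p) => [|[[u _]|]] ->; rewrite ?b0 ?subr0 ?oppr0.
have flt_up_irr : irreflexive [rel x y | flt alpha y x] by move=> x; apply: flt_irr.
have flt_up_trans : transitive [rel x y | flt alpha y x].
  by move=> y x z /= lt_yx lt_zy; apply: flt_trans lt_zy lt_yx.
elim/(fin_strict_ind flt_up_irr flt_up_trans) => p /= IH.
case: (ab p) => [|[[u lt_pu]|]]; rewrite a0.
- by move<-.
- by rewrite (IH u lt_pu) subr0 => <-.
- by move/eqP; rewrite eq_sym oppr_eq0 => /eqP.
Qed.

Section Reversal.
Hypothesis fle_rev : forall u v : T, fle alpha u v -> fle alpha (rev_ord v) (rev_ord u).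

Lemma flt_rev {u v : T} : flt alpha u v -> flt alpha (rev_ord v) (rev_ord u).
Proof.
case/andP=> neq_uv le_uv; rewrite /flt fle_rev // andbT.
by apply: contra_neq neq_uv => /rev_ord_inj ->.
Qed.

Lemma maximal_rev {p : T} : maximal p -> minimal (rev_ord p).
Proof. by move=> max_p y; apply: contraNN (max_p (rev_ord y)) => /flt_rev; rewrite rev_ordK. Qed.

Lemma minimal_rev {p : T} : minimal p -> maximal (rev_ord p).
Proof. by move=> min_p y; apply: contraNN (min_p (rev_ord y)) => /flt_rev; rewrite rev_ordK. Qed.

Lemma unique_upper_cover_rev {p u : T} :
  unique_upper_cover p u -> unique_lower_cover (rev_ord p) (rev_ord u).
Proof.
case=> lt_pu above_u; split=> [|y]; first exact: flt_rev.
by move/flt_rev; rewrite rev_ordK => /above_u /fle_rev; rewrite rev_ordK.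
Qed.

Section Defects.
Variable I : {set T}.
Hypothesis idI : is_ideal alpha I.
Local Notation O := (orbit (rowmotion alpha) I).

Definition chi_defect (p : T) : rat :=
  \sum_(J <- O) (chi alpha p J - chi alpha (rev_ord p) J).
Definition chihat_defect (p : T) : rat :=
  \sum_(J <- O) (chihat alpha p J + chihat alpha (rev_ord p) J) - (size O)%:R.

Lemma defect_relation p :
  chi_defect p = chihat_defect p \/
  (exists2 u, flt alpha p u & chi_defect p = chihat_defect p - chihat_defect u) \/
  chi_defect p = - chihat_defect p.
Proof.
rewrite /chi_defect /chihat_defect sumrB !big_split /=.
have [max_p|[[u cov]|min_p]] := fence_trichotomy p.
- left; rewrite (sum_chi_maximal max_p) (sum_chi_minimal idI (maximal_rev max_p)).
  ring.
- right; left; exists u; first by case: cov.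
  rewrite (sum_chi_unique_upper_cover idI cov).
  rewrite (sum_chi_unique_lower_cover idI (unique_upper_cover_rev cov)) !big_split /=.
  ring.
- right; right; rewrite (sum_chi_minimal idI min_p) (sum_chi_maximal (minimal_rev min_p)).
  ring.
Qed.

End Defects.

Lemma mesic_chi_iff_mesic_chihat :
  (forall k : T, mesic alpha (fun I => chi alpha k I - chi alpha (rev_ord k) I) 0) <->
  (forall k : T, mesic alpha (fun I => chihat alpha k I + chihat alpha (rev_ord k) I) 1).
Proof.
have chiE k : mesic alpha (fun I => chi alpha k I - chi alpha (rev_ord k) I) 0 <->
    forall I, is_ideal alpha I -> chi_defect I k = 0.
  split=> [/mesicE chi0 I /chi0 | chi0]; first by rewrite mul0r.
  by apply/mesicE => I /chi0; rewrite mul0r.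
have chihatE k : mesic alpha (fun I => chihat alpha k I + chihat alpha (rev_ord k) I) 1 <->
    forall I, is_ideal alpha I -> chihat_defect I k = 0.
  split=> [/mesicE hat1 I /hat1 | hat0]; first by rewrite mul1r /chihat_defect => ->; rewrite subrr.
  by apply/mesicE => I /hat0/eqP; rewrite subr_eq0 mul1r => /eqP.
split=> mesic_k k.
- apply/chihatE => I idI; move: k; apply: (defects_eq0 (defect_relation I idI)).1 => k.
  exact: (chiE k).1 (mesic_k k) I idI.
- apply/chiE => I idI; move: k; apply: (defects_eq0 (defect_relation I idI)).2 => k.
  exact: (chihatE k).1 (mesic_k k) I idI.
Qed.

End Reversal.

End Mesic.

End Fence.

Section Palindrome.
Variable alpha : seq nat.
Hypothesis alpha_rev : rev alpha = alpha.
Local Notation n := (fence_n alpha).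

Lemma psum_leq_sumn k : psum alpha k <= sumn alpha.
Proof. by rewrite -[X in _ <= sumn X](cat_take_drop k) sumn_cat leq_addr. Qed.

Lemma psum_rev k : psum alpha (size alpha - k) = sumn alpha - psum alpha k.
Proof.
rewrite /psum; have := rev_drop k alpha; rewrite alpha_rev => <-.
by rewrite sumn_rev -[X in _ = sumn X - _](cat_take_drop k) sumn_cat addKn.
Qed.

Lemma segE j : seg alpha j = count (fun k => psum alpha k <= j) (iota 0 (size alpha).+1).
Proof. by rewrite /seg /= /psum take0 add1n. Qed.

Lemma seg_rev j :
  j < sumn alpha -> seg alpha j + seg alpha (sumn alpha - j.+1) = (size alpha).+1.
Proof.
move=> lt_j; rewrite !segE -[X in _ + X = _](count_iota_rev _ (size alpha)).
have -> : count (fun k => psum alpha (size alpha - k) <= sumn alpha - j.+1)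
                (iota 0 (size alpha).+1) =
          count (predC (fun k => psum alpha k <= j)) (iota 0 (size alpha).+1).
  by apply: eq_count => k /=; rewrite psum_rev; have := psum_leq_sumn k; case: leqP; lia.
by rewrite count_predC size_iota.
Qed.

Lemma rising_sym i j :
  odd (size alpha) -> i + j.+2 = n -> rising alpha i = rising alpha j.
Proof.
rewrite /rising /fence_n => odd_t Eij.
have lt_i : i.+1 < sumn alpha by lia.
have := seg_rev _ lt_i; have -> : sumn alpha - i.+2 = j.+1 by lia.
move/(congr1 odd); rewrite oddD oddS odd_t.
by case: (odd (seg alpha i.+1)); case: (odd (seg alpha j.+1)).
Qed.

Lemma fle_rev_ord :
  odd (size alpha) -> forall u v : 'I_n, fle alpha u v -> fle alpha (rev_ord v) (rev_ord u).
Proof.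
move=> odd_t u v /fleP walk; apply/fleP; have := ltn_ord u; have := ltn_ord v.
case: walk => [[le_uv r]|[le_vu f]]; [left | right]; split=> /= [|j ?]; try lia.
- by rewrite (@rising_sym j (n - j.+2)) //; [apply: r | ]; lia.
- by rewrite (@rising_sym j (n - j.+2)) //; [apply: f | ]; lia.
Qed.

End Palindrome.

Local Open Scope ring_scope.

Theorem corollary5p11 (alpha : seq nat)
  (ht : (2 <= size alpha)%N)
  (hpos : all (fun a => 0 < a)%N alpha)
  (hfirst : (2 <= head 0 alpha)%N)
  (hlast : (2 <= last 0 alpha)%N)
  (hpal : forall i : nat, (i < size alpha)%N ->
            nth 0%N alpha i = nth 0%N alpha (size alpha - 1 - i))
  (hodd : odd (size alpha)) :
  (forall k : 'I_(fence_n alpha),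
      mesic alpha (fun I => chi alpha k I - chi alpha (rev_ord k) I) 0)
  <->
  (forall k : 'I_(fence_n alpha),
      mesic alpha (fun I => chihat alpha k I + chihat alpha (rev_ord k) I) 1).
Proof.
apply: mesic_chi_iff_mesic_chihat.
exact: fle_rev_ord (rev_palindrome hpal) hodd.
Qed.
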